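(* On $S^3$ with its standard pseudohermitian structure, let $\phi\in C^\infty(S^3)$ be complex with $|\phi|<1$, $F=(1-|\phi|^2)^{-1/2}$, and consider the CR structure spanned by $Z_{\bar1}^\phi=F(Z_{\bar1}+\phi Z_1)$ with the same contact form $\theta$ and coframe $\theta^1_\phi=F(\theta^1-\phi\theta^{\bar1})$. Then its connection form and torsion are $$\theta_1{}^1{}_\phi=\theta_1{}^1-F^{-1}dF-F^{-1}(B_{11}\theta^1+B_{12}\theta^{\bar1}+B_{13}\theta),\qquad A^1{}_{\bar1}{}^\phi=-F^2(\phi_0-4i\phi),$$ where $B_{11}=F^2(-2F_1-F\bar\phi_{\bar1}-\bar\phi F\phi_1-2\bar\phi F_{\bar1})$, $B_{12}=F^2(2|\phi|^2F_{\bar1}+F\phi_1+\phi F\bar\phi_{\bar1}+2\phi F_1)$, $B_{13}=-\bar\phi F^3(\phi_0-4i\phi)$.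
   Context: $S^3=\{|z_1|^2+|z_2|^2=1\}\subset\mathbb{C}^2$, $\theta=\frac{i}{2}(\bar\partial u-\partial u)|_{S^3}$ with $u=|z_1|^2+|z_2|^2-1$; $Z_1=\bar z_2\partial_{z_1}-\bar z_1\partial_{z_2}$, $Z_{\bar1}=\overline{Z_1}$, $\theta^1=z_2dz_1-z_1dz_2$ (so $d\theta=i\theta^1\wedge\theta^{\bar1}$), Reeb field $T=i\sum_j(z_j\partial_{z_j}-\bar z_j\partial_{\bar z_j})$, standard connection form $\theta_1{}^1=-2i\theta$, zero torsion. For a coframe $\{\theta,\vartheta^1,\vartheta^{\bar1}\}$ with $d\theta=i\vartheta^1\wedge\vartheta^{\bar1}$, the connection form $\vartheta_1{}^1$ and torsion $\tau^1=A^1{}_{\bar1}\vartheta^{\bar1}$ are determined by $d\vartheta^1=\vartheta^1\wedge\vartheta_1{}^1+\theta\wedge\tau^1$, $\tau^1\equiv0\bmod\vartheta^{\bar1}$, $\vartheta_1{}^1+\vartheta_{\bar1}{}^{\bar1}=0$. Notation: $\phi_1=Z_1\phi$, $\bar\phi_{\bar1}=Z_{\bar1}\bar\phi$, $F_1=Z_1F$, $F_{\bar1}=Z_{\bar1}F$, $\phi_0=T\phi$. *)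

From Stdlib Require Import Reals List.
From Coquelicot Require Import Coquelicot.

Open Scope R_scope.

(** Points of C^2 (= R^4) and real vectors of R^4, both encoded as pairs of
    complex numbers (z1, z2). *)
Definition Point := (C * C)%type.

Definition S3 (p : Point) : Prop :=
  (Cmod (fst p)) ^ 2 + (Cmod (snd p)) ^ 2 = 1.

Definition tangent (p v : Point) : Prop :=
  Re (Cplus (Cmult (Cconj (fst p)) (fst v)) (Cmult (Cconj (snd p)) (snd v))) = 0.

Definition shift (p v : Point) (t : R) : Point :=
  (Cplus (fst p) (Cmult (RtoC t) (fst v)), Cplus (snd p) (Cmult (RtoC t) (snd v))).

Definition dd (f : Point -> C) (p v : Point) : C :=
  Cplus (RtoC (Derive (fun t => Re (f (shift p v t))) 0))
        (Cmult Ci (RtoC (Derive (fun t => Im (f (shift p v t))) 0))).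

Definition ex1 : Point := (RtoC 1, RtoC 0).
Definition ey1 : Point := (Ci, RtoC 0).
Definition ex2 : Point := (RtoC 0, RtoC 1).
Definition ey2 : Point := (RtoC 0, Ci).

Definition basis_dir (e : Point) : Prop := e = ex1 \/ e = ey1 \/ e = ex2 \/ e = ey2.

Fixpoint iter_pd (l : list Point) (f : Point -> C) : Point -> C :=
  match l with
  | nil => f
  | e :: l' => fun p => dd (iter_pd l' f) p e
  end.

Definition smooth (f : Point -> C) : Prop :=
  forall l : list Point, List.Forall basis_dir l ->
    (forall p, continuous (iter_pd l f) p) /\
    (forall e p, basis_dir e ->
       ex_derive (fun t => Re (iter_pd l f (shift p e t))) 0 /\
       ex_derive (fun t => Im (iter_pd l f (shift p e t))) 0).

Definition half : C := RtoC (/ 2).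
Definition dz1 (f : Point -> C) (p : Point) : C :=
  Cmult half (Cminus (dd f p ex1) (Cmult Ci (dd f p ey1))).
Definition dz2 (f : Point -> C) (p : Point) : C :=
  Cmult half (Cminus (dd f p ex2) (Cmult Ci (dd f p ey2))).
Definition dzb1 (f : Point -> C) (p : Point) : C :=
  Cmult half (Cplus (dd f p ex1) (Cmult Ci (dd f p ey1))).
Definition dzb2 (f : Point -> C) (p : Point) : C :=
  Cmult half (Cplus (dd f p ex2) (Cmult Ci (dd f p ey2))).

Definition Z1 (f : Point -> C) (p : Point) : C :=
  Cminus (Cmult (Cconj (snd p)) (dz1 f p)) (Cmult (Cconj (fst p)) (dz2 f p)).
Definition Zb1 (f : Point -> C) (p : Point) : C :=
  Cminus (Cmult (snd p) (dzb1 f p)) (Cmult (fst p) (dzb2 f p)).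
Definition Tf (f : Point -> C) (p : Point) : C :=
  Cmult Ci (Cminus (Cplus (Cmult (fst p) (dz1 f p)) (Cmult (snd p) (dz2 f p)))
                   (Cplus (Cmult (Cconj (fst p)) (dzb1 f p))
                          (Cmult (Cconj (snd p)) (dzb2 f p)))).

(** Complex-valued 1-forms on (an open subset of) R^4, given by their values
    omega p v on real vectors v (R-linear in v). *)
Definition cform1 := Point -> Point -> C.

(** theta = (i/2)(dbar u - d u), u = |z1|^2+|z2|^2-1,
    i.e. theta = (i/2) sum_j (z_j dzbar_j - zbar_j dz_j). *)
Definition theta : cform1 := fun p v =>
  Cmult (Cmult Ci half)
    (Cminus (Cplus (Cmult (fst p) (Cconj (fst v))) (Cmult (snd p) (Cconj (snd v))))
            (Cplus (Cmult (Cconj (fst p)) (fst v)) (Cmult (Cconj (snd p)) (snd v)))).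

Definition theta1 : cform1 := fun p v =>
  Cminus (Cmult (snd p) (fst v)) (Cmult (fst p) (snd v)).
Definition thetab1 : cform1 := fun p v => Cconj (theta1 p v).

Definition theta11 : cform1 := fun p v => Cmult (Copp (Cmult (RtoC 2) Ci)) (theta p v).

(** Wedge product and exterior derivative (evaluated on constant vectors). *)
Definition wedge (a b : cform1) (p v w : Point) : C :=
  Cminus (Cmult (a p v) (b p w)) (Cmult (a p w) (b p v)).
Definition ext_d (a : cform1) (p v w : Point) : C :=
  Cminus (dd (fun q => a q w) p v) (dd (fun q => a q v) p w).

Definition is_connection_torsion (th th1 om : cform1) (A : Point -> C) : Prop :=
  forall p, S3 p -> forall v w, tangent p v -> tangent p w ->
    ext_d th1 p v w =
      Cplus (wedge th1 om p v w) (wedge th (fun q u => Cmult (A q) (Cconj (th1 q u))) p v w)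
    /\ Cplus (om p v) (Cconj (om p v)) = RtoC 0.

Definition Fphi (phi : Point -> C) : Point -> C := fun p =>
  RtoC (/ sqrt (1 - (Cmod (phi p)) ^ 2)).

Definition theta1_phi (phi : Point -> C) : cform1 := fun p v =>
  Cmult (Fphi phi p) (Cminus (theta1 p v) (Cmult (phi p) (thetab1 p v))).

Definition phibar (phi : Point -> C) : Point -> C := fun p => Cconj (phi p).

Definition B11 (phi : Point -> C) (p : Point) : C :=
  let F := Fphi phi p in
  Cmult (Cmult F F)
   (Cminus (Cminus (Cminus (Copp (Cmult (RtoC 2) (Z1 (Fphi phi) p)))
                           (Cmult F (Zb1 (phibar phi) p)))
                   (Cmult (Cmult (phibar phi p) F) (Z1 phi p)))
           (Cmult (Cmult (RtoC 2) (phibar phi p)) (Zb1 (Fphi phi) p))).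

Definition B12 (phi : Point -> C) (p : Point) : C :=
  let F := Fphi phi p in
  Cmult (Cmult F F)
   (Cplus (Cplus (Cplus (Cmult (Cmult (RtoC 2) (RtoC ((Cmod (phi p)) ^ 2))) (Zb1 (Fphi phi) p))
                        (Cmult F (Z1 phi p)))
                 (Cmult (Cmult (phi p) F) (Zb1 (phibar phi) p)))
          (Cmult (Cmult (RtoC 2) (phi p)) (Z1 (Fphi phi) p))).

Definition phi0m (phi : Point -> C) (p : Point) : C :=
  Cminus (Tf phi p) (Cmult (Cmult (RtoC 4) Ci) (phi p)).

Definition B13 (phi : Point -> C) (p : Point) : C :=
  let F := Fphi phi p in
  Copp (Cmult (Cmult (phibar phi p) (Cmult F (Cmult F F))) (phi0m phi p)).

Definition omega_phi (phi : Point -> C) : cform1 := fun p v =>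
  Cminus (Cminus (theta11 p v) (Cmult (Cinv (Fphi phi p)) (dd (Fphi phi) p v)))
         (Cmult (Cinv (Fphi phi p))
                (Cplus (Cplus (Cmult (B11 phi p) (theta1 p v))
                              (Cmult (B12 phi p) (thetab1 p v)))
                       (Cmult (B13 phi p) (theta p v)))).

Definition A_phi (phi : Point -> C) (p : Point) : C :=
  Copp (Cmult (Cmult (Fphi phi p) (Fphi phi p)) (phi0m phi p)).

(* On S^3 the differential of a function splits in the coframe as
   df = Z_1 f theta^1 + Z_1bar f theta^1bar + T f theta, and d theta^1 = theta^1 /\ (-2i theta).
   Expanding d theta^1_phi = d(F (theta^1 - phi theta^1bar)) with the product rule (directional
   derivatives of the smooth phi and of F are computed from partial derivatives, phi being C^1)
   turns the structure equation for (omega_phi, A_phi), as well as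
   omega_phi + conj omega_phi = 0, into rational identities in F, phi and its derivatives that
   hold modulo F^2 (1 - |phi|^2) = 1.
   Uniqueness.  The difference (delta, alpha) of two solutions satisfies
   theta^1_phi /\ delta + alpha theta /\ conj theta^1_phi = 0.  Evaluating on the Reeb field T
   and on horizontal vectors X_c with theta^1_phi(X_c) = c gives alpha = 0 (take c = 1, i) and
   delta = theta^1_phi delta(X_1); since delta(X_i) = i delta(X_1) and delta is imaginary,
   delta = 0. *)

From Stdlib Require Import Reals Lra Nsatz List.
From Coquelicot Require Import Coquelicot.

Open Scope R_scope.

Definition is_dderive (f : Point -> C) (p v : Point) (d : C) : Prop :=
  is_derive (fun t => Re (f (shift p v t))) 0 (Re d) /\
  is_derive (fun t => Im (f (shift p v t))) 0 (Im d).

Lemma shift_0 p v : shift p v 0 = p.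
Proof.
  destruct p as [[a b] [c d]], v as [[e g] [h k]].
  unfold shift, Cplus, Cmult, RtoC; simpl. f_equal; f_equal; ring.
Qed.

Lemma shift_ex1 q s : shift q ex1 s = ((fst (fst q) + s, snd (fst q)), snd q).
Proof.
  destruct q as [[a b] [c d]]. unfold shift, ex1, Cplus, Cmult, RtoC; simpl.
  f_equal; f_equal; f_equal; ring.
Qed.

Lemma shift_ey1 q s : shift q ey1 s = ((fst (fst q), snd (fst q) + s), snd q).
Proof.
  destruct q as [[a b] [c d]]. unfold shift, ey1, Ci, Cplus, Cmult, RtoC; simpl.
  f_equal; f_equal; f_equal; ring.
Qed.

Lemma shift_ex2 q s : shift q ex2 s = (fst q, (fst (snd q) + s, snd (snd q))).
Proof.
  destruct q as [[a b] [c d]]. unfold shift, ex2, Cplus, Cmult, RtoC; simpl.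
  f_equal; f_equal; f_equal; ring.
Qed.

Lemma shift_ey2 q s : shift q ey2 s = (fst q, (fst (snd q), snd (snd q) + s)).
Proof.
  destruct q as [[a b] [c d]]. unfold shift, ey2, Ci, Cplus, Cmult, RtoC; simpl.
  f_equal; f_equal; f_equal; ring.
Qed.

Lemma shift_axes p v h :
  shift p v h =
  shift (shift (shift (shift p ex1 (h * fst (fst v))) ey1 (h * snd (fst v)))
          ex2 (h * fst (snd v))) ey2 (h * snd (snd v)).
Proof.
  rewrite shift_ey2, shift_ex2, shift_ey1, shift_ex1.
  destruct p as [[x1 y1] [x2 y2]], v as [[a1 b1] [a2 b2]].
  unfold shift, Cplus, Cmult, RtoC; simpl. f_equal; f_equal; ring.
Qed.

Lemma shift_shift q e s u : shift (shift q e s) e u = shift q e (s + u).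
Proof.
  destruct q as [[a b] [c d]], e as [[e1 e2] [e3 e4]].
  unfold shift, Cplus, Cmult, RtoC; simpl. f_equal; f_equal; ring.
Qed.

Lemma Re_dd f p v : Re (dd f p v) = Derive (fun t => Re (f (shift p v t))) 0.
Proof. unfold dd, Cplus, Cmult, Ci, RtoC, Re, Im; simpl. ring. Qed.

Lemma Im_dd f p v : Im (dd f p v) = Derive (fun t => Im (f (shift p v t))) 0.
Proof. unfold dd, Cplus, Cmult, Ci, RtoC, Re, Im; simpl. ring. Qed.

Lemma is_dderive_dd f p v d : is_dderive f p v d -> dd f p v = d.
Proof.
  intros [Hre Him].
  apply injective_projections.
  - change (Re (dd f p v) = Re d). rewrite Re_dd. exact (is_derive_unique _ _ _ Hre).
  - change (Im (dd f p v) = Im d). rewrite Im_dd. exact (is_derive_unique _ _ _ Him).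
Qed.

Lemma is_derive_val (f : R -> R) x l l' : is_derive f x l -> l = l' -> is_derive f x l'.
Proof. intros H <-; exact H. Qed.

Lemma is_dderive_val f p v d d' : is_dderive f p v d -> d = d' -> is_dderive f p v d'.
Proof. intros H <-; exact H. Qed.

Lemma is_dderive_const (c : C) p v : is_dderive (fun _ => c) p v 0%C.
Proof. split; (eapply is_derive_val; [apply is_derive_const | reflexivity]). Qed.

Lemma is_dderive_plus f g p v df dg :
  is_dderive f p v df -> is_dderive g p v dg ->
  is_dderive (fun q => f q + g q)%C p v (df + dg)%C.
Proof.
  intros [Hf1 Hf2] [Hg1 Hg2]; split; simpl.
  - exact (is_derive_plus _ _ _ _ _ Hf1 Hg1).
  - exact (is_derive_plus _ _ _ _ _ Hf2 Hg2).
Qed.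

Lemma is_dderive_opp f p v df :
  is_dderive f p v df -> is_dderive (fun q => - f q)%C p v (- df)%C.
Proof.
  intros [Hf1 Hf2]; split; simpl.
  - exact (is_derive_opp _ _ _ Hf1).
  - exact (is_derive_opp _ _ _ Hf2).
Qed.

Lemma is_dderive_minus f g p v df dg :
  is_dderive f p v df -> is_dderive g p v dg ->
  is_dderive (fun q => f q - g q)%C p v (df - dg)%C.
Proof.
  intros Hf Hg. apply (is_dderive_plus f (fun q => - g q)%C); auto.
  apply is_dderive_opp; exact Hg.
Qed.

Lemma is_dderive_conj f p v df :
  is_dderive f p v df -> is_dderive (fun q => Cconj (f q)) p v (Cconj df).
Proof.
  intros [Hf1 Hf2]; split; simpl.
  - exact Hf1.
  - exact (is_derive_opp _ _ _ Hf2).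
Qed.

Lemma is_derive_Rmult (f g : R -> R) x df dg :
  is_derive f x df -> is_derive g x dg ->
  is_derive (fun t => f t * g t) x (df * g x + f x * dg).
Proof. intros Hf Hg. exact (is_derive_mult f g x df dg Hf Hg Rmult_comm). Qed.

Lemma is_dderive_mult f g p v df dg :
  is_dderive f p v df -> is_dderive g p v dg ->
  is_dderive (fun q => f q * g q)%C p v (df * g p + f p * dg)%C.
Proof.
  intros [Hf1 Hf2] [Hg1 Hg2].
  pose proof (shift_0 p v) as Hp.
  split; simpl.
  - eapply is_derive_val.
    + exact (is_derive_minus _ _ _ _ _
        (is_derive_Rmult _ _ _ _ _ Hf1 Hg1) (is_derive_Rmult _ _ _ _ _ Hf2 Hg2)).
    + cbv beta. rewrite Hp. unfold minus, plus, opp, Re, Im; simpl. ring.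
  - eapply is_derive_val.
    + exact (is_derive_plus _ _ _ _ _
        (is_derive_Rmult _ _ _ _ _ Hf1 Hg2) (is_derive_Rmult _ _ _ _ _ Hf2 Hg1)).
    + cbv beta. rewrite Hp. unfold plus, Re, Im; simpl. ring.
Qed.

Lemma is_dderive_fst p v : is_dderive (fun q => fst q) p v (fst v).
Proof.
  destruct p as [[x1 y1] p2], v as [[a b] v2].
  split; simpl; auto_derive; auto; ring.
Qed.

Lemma is_dderive_snd p v : is_dderive (fun q => snd q) p v (snd v).
Proof.
  destruct p as [p1 [x2 y2]], v as [v1 [a b]].
  split; simpl; auto_derive; auto; ring.
Qed.

(* Definitionally Coquelicot's [ball p d q] on [C * C]. *)
Definition near (p q : Point) (d : R) : Prop :=
  (Rabs (fst (fst q) - fst (fst p)) < d /\ Rabs (snd (fst q) - snd (fst p)) < d) /\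
  (Rabs (fst (snd q) - fst (snd p)) < d /\ Rabs (snd (snd q) - snd (snd p)) < d).

Lemma near_le p q d d' : near p q d -> d <= d' -> near p q d'.
Proof. unfold near; intros; lra. Qed.

Lemma basis_common_delta (p : Point) (P : Point -> Point -> Prop) :
  (forall e, basis_dir e -> exists d, 0 < d /\ forall q, near p q d -> P e q) ->
  exists d, 0 < d /\ forall e, basis_dir e -> forall q, near p q d -> P e q.
Proof.
  intros H.
  destruct (H ex1 (or_introl eq_refl)) as [d1 [Hd1 H1]].
  destruct (H ey1 (or_intror (or_introl eq_refl))) as [d2 [Hd2 H2]].
  destruct (H ex2 (or_intror (or_intror (or_introl eq_refl)))) as [d3 [Hd3 H3]].
  destruct (H ey2 (or_intror (or_intror (or_intror eq_refl)))) as [d4 [Hd4 H4]].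
  exists (Rmin (Rmin d1 d2) (Rmin d3 d4)). split.
  - repeat apply Rmin_case; assumption.
  - intros e [-> | [-> | [-> | ->]]] q Hq; [apply H1 | apply H2 | apply H3 | apply H4];
      apply (near_le _ _ _ _ Hq);
      [ apply Rle_trans with (Rmin d1 d2); apply Rmin_l
      | apply Rle_trans with (Rmin d1 d2); [apply Rmin_l | apply Rmin_r]
      | apply Rle_trans with (Rmin d3 d4); [apply Rmin_r | apply Rmin_l]
      | apply Rle_trans with (Rmin d3 d4); apply Rmin_r ].
Qed.

Lemma continuous_near (f : Point -> C) p : continuous f p ->
  forall eps, 0 < eps -> exists d, 0 < d /\ forall q, near p q d ->
    Rabs (Re (f q) - Re (f p)) < eps /\ Rabs (Im (f q) - Im (f p)) < eps.
Proof.
  intros Hf eps Heps. apply filterlim_locally with (eps := mkposreal _ Heps) in Hf.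
  destruct Hf as [d Hd]. exists d. split; [apply cond_pos |].
  intros q Hq. exact (Hd q Hq).
Qed.

Lemma is_derive_translate (h : R -> R) s l :
  is_derive (fun u => h (s + u)) 0 l -> is_derive h s l.
Proof.
  intro H.
  apply (is_derive_ext (fun x => h (s + (x - s)))); [intro x; f_equal; ring |].
  eapply is_derive_val.
  - apply (is_derive_comp (fun u => h (s + u)) (fun x => x - s)).
    + replace (s - s) with 0 by ring. exact H.
    + auto_derive; auto.
  - simpl. unfold scal; simpl. unfold mult; simpl. ring.
Qed.

Definition coord_sum (v : Point) : R :=
  Rabs (fst (fst v)) + Rabs (snd (fst v)) + Rabs (fst (snd v)) + Rabs (snd (snd v)).

Definition grad_along (Dg : Point -> Point -> R) (p v : Point) : R :=
  fst (fst v) * Dg p ex1 + snd (fst v) * Dg p ey1 + fst (snd v) * Dg p ex2 + snd (snd v) * Dg p ey2.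

Lemma axis_path_near p c1 c2 c3 c4 d :
  Rabs c1 < d -> Rabs c2 < d -> Rabs c3 < d -> Rabs c4 < d ->
  (forall s, Rabs s <= Rabs c1 -> near p (shift p ex1 s) d) /\
  (forall s, Rabs s <= Rabs c2 -> near p (shift (shift p ex1 c1) ey1 s) d) /\
  (forall s, Rabs s <= Rabs c3 -> near p (shift (shift (shift p ex1 c1) ey1 c2) ex2 s) d) /\
  (forall s, Rabs s <= Rabs c4 ->
     near p (shift (shift (shift (shift p ex1 c1) ey1 c2) ex2 c3) ey2 s) d).
Proof.
  intros B1 B2 B3 B4.
  pose proof (Rabs_def2 _ _ B1); pose proof (Rabs_def2 _ _ B2); pose proof (Rabs_def2 _ _ B3).
  destruct p as [[x1 y1] [x2 y2]].
  repeat match goal with |- _ /\ _ => split end;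
    intros s Hs; assert (Hsd : Rabs s < d) by lra; apply Rabs_def2 in Hsd;
    unfold near; rewrite ?shift_ey2, ?shift_ex2, ?shift_ey1, ?shift_ex1; simpl;
    repeat split; apply Rabs_def1; lra.
Qed.

Section C1_criterion.

Variables (g : Point -> R) (Dg : Point -> Point -> R).
Hypothesis g_partial :
  forall q e, basis_dir e -> is_derive (fun t => g (shift q e t)) 0 (Dg q e).

Lemma mvt_along q e c : basis_dir e ->
  exists s, Rabs s <= Rabs c /\ g (shift q e c) - g q = c * Dg (shift q e s) e.
Proof.
  intros He.
  assert (Hd : forall s, is_derive (fun s => g (shift q e s)) s (Dg (shift q e s) e)).
  { intro s. apply is_derive_translate.
    apply (is_derive_ext (fun u => g (shift (shift q e s) e u))).
    - intro u. rewrite shift_shift. reflexivity.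
    - apply g_partial, He. }
  destruct (MVT_gen (fun s => g (shift q e s)) 0 c (fun s => Dg (shift q e s) e))
    as [s [Hs Heq]].
  - intros x _. apply Hd.
  - intros x _. apply derivable_continuous_pt.
    exists (Dg (shift q e x) e). apply is_derive_Reals, Hd.
  - exists s. split.
    + revert Hs. apply Rmin_case; apply Rmax_case; intros Hs;
        unfold Rabs; repeat destruct Rcase_abs; lra.
    + rewrite shift_0 in Heq. rewrite Heq. ring.
Qed.

Lemma axis_increment p q e c d eps : basis_dir e ->
  (forall s, Rabs s <= Rabs c -> near p (shift q e s) d) ->
  (forall r, near p r d -> Rabs (Dg r e - Dg p e) <= eps) ->
  Rabs (g (shift q e c) - g q - c * Dg p e) <= eps * Rabs c.
Proof.
  intros He Hnear Hclose.
  destruct (mvt_along q e c He) as [s [Hs Heq]].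
  rewrite Heq.
  replace (c * Dg (shift q e s) e - c * Dg p e) with (c * (Dg (shift q e s) e - Dg p e)) by ring.
  rewrite Rabs_mult, Rmult_comm.
  apply Rmult_le_compat_r; [apply Rabs_pos | apply Hclose, Hnear, Hs].
Qed.

(* Walk from p to p + h v along the four coordinate axes. *)
Lemma increment_estimate p v h d eps :
  (forall e, basis_dir e -> forall r, near p r d -> Rabs (Dg r e - Dg p e) <= eps) ->
  Rabs h * coord_sum v < d ->
  Rabs (g (shift p v h) - g p - h * grad_along Dg p v) <= eps * (Rabs h * coord_sum v).
Proof.
  intros Hclose Hh.
  assert (Hsmall : forall c, Rabs c <= coord_sum v -> Rabs (h * c) < d).
  { intros c Hc. rewrite Rabs_mult.
    apply Rle_lt_trans with (2 := Hh). apply Rmult_le_compat_l; [apply Rabs_pos | exact Hc]. }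
  unfold coord_sum, grad_along in *. rewrite shift_axes.
  set (a1 := fst (fst v)) in *; set (b1 := snd (fst v)) in *;
    set (a2 := fst (snd v)) in *; set (b2 := snd (snd v)) in *.
  pose proof (Rabs_pos a1); pose proof (Rabs_pos b1);
    pose proof (Rabs_pos a2); pose proof (Rabs_pos b2).
  destruct (axis_path_near p (h * a1) (h * b1) (h * a2) (h * b2) d)
    as [N1 [N2 [N3 N4]]]; try (apply Hsmall; lra).
  set (q1 := shift p ex1 (h * a1)) in *.
  set (q2 := shift q1 ey1 (h * b1)) in *.
  set (q3 := shift q2 ex2 (h * a2)) in *.
  set (q4 := shift q3 ey2 (h * b2)) in *.
  pose proof (axis_increment p p ex1 (h * a1) d eps (or_introl eq_refl) N1
                (Hclose ex1 (or_introl eq_refl))) as I1.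
  pose proof (axis_increment p q1 ey1 (h * b1) d eps (or_intror (or_introl eq_refl)) N2
                (Hclose ey1 (or_intror (or_introl eq_refl)))) as I2.
  pose proof (axis_increment p q2 ex2 (h * a2) d eps (or_intror (or_intror (or_introl eq_refl)))
                N3 (Hclose ex2 (or_intror (or_intror (or_introl eq_refl))))) as I3.
  pose proof (axis_increment p q3 ey2 (h * b2) d eps (or_intror (or_intror (or_intror eq_refl)))
                N4 (Hclose ey2 (or_intror (or_intror (or_intror eq_refl))))) as I4.
  fold q1 in I1; fold q2 in I2; fold q3 in I3; fold q4 in I4.
  set (u1 := g q1 - g p - h * a1 * Dg p ex1) in *.
  set (u2 := g q2 - g q1 - h * b1 * Dg p ey1) in *.
  set (u3 := g q3 - g q2 - h * a2 * Dg p ex2) in *.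
  set (u4 := g q4 - g q3 - h * b2 * Dg p ey2) in *.
  replace (g q4 - g p - h * (a1 * Dg p ex1 + b1 * Dg p ey1 + a2 * Dg p ex2 + b2 * Dg p ey2))
    with (u1 + u2 + u3 + u4) by (unfold u1, u2, u3, u4; ring).
  pose proof (Rabs_triang (u1 + u2 + u3) u4); pose proof (Rabs_triang (u1 + u2) u3);
    pose proof (Rabs_triang u1 u2).
  rewrite !Rabs_mult in I1, I2, I3, I4.
  nra.
Qed.

Lemma C1_is_derive p v :
  (forall e, basis_dir e -> forall eps, 0 < eps ->
     exists d, 0 < d /\ forall r, near p r d -> Rabs (Dg r e - Dg p e) < eps) ->
  is_derive (fun t => g (shift p v t)) 0 (grad_along Dg p v).
Proof.
  intros Hcont. apply is_derive_Reals. intros eps Heps.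
  set (S := coord_sum v).
  assert (HS : 0 <= S) by (unfold S, coord_sum; pose proof (Rabs_pos (fst (fst v)));
    pose proof (Rabs_pos (snd (fst v))); pose proof (Rabs_pos (fst (snd v)));
    pose proof (Rabs_pos (snd (snd v))); lra).
  set (eps' := eps / (2 * (1 + S))).
  assert (Heps' : 0 < eps') by (unfold eps'; apply Rdiv_lt_0_compat; lra).
  destruct (basis_common_delta p (fun e r => Rabs (Dg r e - Dg p e) < eps'))
    as [d [Hd Hclose]]; [intros e He; exact (Hcont e He eps' Heps') |].
  assert (Hdelta : 0 < d / (1 + S)) by (apply Rdiv_lt_0_compat; lra).
  exists (mkposreal _ Hdelta). intros h Hh0 Hh. simpl in Hh.
  rewrite Rplus_0_l, shift_0.
  assert (HhS : Rabs h * S < d).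
  { apply Rle_lt_trans with (Rabs h * (1 + S)).
    - apply Rmult_le_compat_l; [apply Rabs_pos | lra].
    - apply (Rmult_lt_compat_r (1 + S)) in Hh; [| lra].
      unfold Rdiv in Hh. rewrite Rmult_assoc, Rinv_l in Hh; lra. }
  pose proof (increment_estimate p v h d eps'
    (fun e He r Hr => Rlt_le _ _ (Hclose e He r Hr)) HhS) as Hinc.
  replace ((g (shift p v h) - g p) / h - grad_along Dg p v)
    with ((g (shift p v h) - g p - h * grad_along Dg p v) / h) by (field; exact Hh0).
  unfold Rdiv. rewrite Rabs_mult, Rabs_inv.
  apply Rle_lt_trans with (eps' * S).
  - apply (Rmult_le_reg_r (Rabs h)); [apply Rabs_pos_lt, Hh0 |].
    rewrite Rmult_assoc, Rinv_l by (apply Rabs_no_R0, Hh0).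
    rewrite Rmult_1_r. replace (eps' * S * Rabs h) with (eps' * (Rabs h * S)) by ring. exact Hinc.
  - assert (E : eps' * (2 * (1 + S)) = eps) by (unfold eps'; field; lra). nra.
Qed.

End C1_criterion.

Definition dlin (f : Point -> C) (p v : Point) : C :=
  (RtoC (fst (fst v)) * dd f p ex1 + RtoC (snd (fst v)) * dd f p ey1
   + RtoC (fst (snd v)) * dd f p ex2 + RtoC (snd (snd v)) * dd f p ey2)%C.

Lemma smooth_is_dderive f : smooth f -> forall p v, is_dderive f p v (dlin f p v).
Proof.
  intros Hs p v.
  destruct (Hs nil (Forall_nil _)) as [_ Hex]. simpl in Hex.
  assert (Hcont : forall e, basis_dir e -> forall eps, 0 < eps -> exists d, 0 < d /\
    forall r, near p r d ->
      Rabs (Re (dd f r e) - Re (dd f p e)) < eps /\ Rabs (Im (dd f r e) - Im (dd f p e)) < eps).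
  { intros e He. apply (continuous_near (fun r => dd f r e)).
    exact (proj1 (Hs (e :: nil) (Forall_cons _ He (Forall_nil _))) p). }
  split.
  - eapply is_derive_val.
    + apply (C1_is_derive (fun q => Re (f q)) (fun q e => Re (dd f q e))).
      * intros q e He. rewrite Re_dd. apply Derive_correct, (Hex e q He).
      * intros e He eps Heps. destruct (Hcont e He eps Heps) as [d [Hd Hr]].
        exists d. split; [exact Hd | intros r Hrn; apply (Hr r Hrn)].
    + unfold grad_along, dlin, Cplus, Cmult, RtoC, Re, Im; simpl. ring.
  - eapply is_derive_val.
    + apply (C1_is_derive (fun q => Im (f q)) (fun q e => Im (dd f q e))).
      * intros q e He. rewrite Im_dd. apply Derive_correct, (Hex e q He).
      * intros e He eps Heps. destruct (Hcont e He eps Heps) as [d [Hd Hr]].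
        exists d. split; [exact Hd | intros r Hrn; apply (Hr r Hrn)].
    + unfold grad_along, dlin, Cplus, Cmult, RtoC, Re, Im; simpl. ring.
Qed.

Lemma smooth_dd f p v : smooth f -> is_dderive f p v (dd f p v).
Proof.
  intros Hs. pose proof (smooth_is_dderive f Hs p v) as H.
  rewrite (is_dderive_dd _ _ _ _ H). exact H.
Qed.

Definition Fval (phi : Point -> C) (p : Point) : R := / sqrt (1 - Cmod (phi p) ^ 2).

Lemma is_derive_inv_sqrt (m : R -> R) x dm : is_derive m x dm -> m x < 1 ->
  is_derive (fun t => / sqrt (1 - m t)) x ((/ sqrt (1 - m x)) ^ 3 * dm / 2).
Proof.
  intros Hm Hlt.
  assert (Hs : 0 < sqrt (1 - m x)) by (apply sqrt_lt_R0; lra).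
  eapply is_derive_val.
  - apply is_derive_inv; [apply is_derive_sqrt |].
    + apply (is_derive_minus (fun _ => 1) m); [apply is_derive_const | exact Hm].
    + simpl. lra.
    + apply Rgt_not_eq, Hs.
  - unfold minus, plus, opp, zero; simpl. field. apply Rgt_not_eq, Hs.
Qed.

Lemma is_dderive_Fphi phi p v d : Cmod (phi p) < 1 -> is_dderive phi p v d ->
  is_dderive (Fphi phi) p v
    (RtoC (Fval phi p ^ 3 * (Re (phi p) * Re d + Im (phi p) * Im d))).
Proof.
  intros Hlt [Hre Him].
  assert (Hm : Cmod (phi p) ^ 2 < 1) by (pose proof (Cmod_ge_0 (phi p)); nra).
  split; simpl; [| eapply is_derive_val; [apply is_derive_const | reflexivity]].
  apply (is_derive_ext (fun t => / sqrt (1 - Cmod (phi (shift p v t)) ^ 2))); [reflexivity |].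
  eapply is_derive_val.
  - apply (is_derive_inv_sqrt (fun t => Cmod (phi (shift p v t)) ^ 2)).
    + apply (is_derive_ext (fun t => Re (phi (shift p v t)) ^ 2 + Im (phi (shift p v t)) ^ 2));
        [intro t; symmetry; apply Cmod2_alt |].
      exact (is_derive_plus _ _ _ _ _ (is_derive_pow _ 2 _ _ Hre) (is_derive_pow _ 2 _ _ Him)).
    + rewrite shift_0. exact Hm.
  - cbv beta. rewrite shift_0. unfold Fval, plus, Re, Im; simpl.
    field. apply Rgt_not_eq, sqrt_lt_R0. nra.
Qed.

Ltac expand_coords :=
  unfold dlin, Z1, Zb1, Tf, dz1, dz2, dzb1, dzb2, theta1, thetab1, theta, half,
    ex1, ey1, ex2, ey2, Cminus in *;
  unfold Cplus, Cmult, Copp, Cconj, Ci, RtoC, Re, Im in *; simpl in *.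

(* On large goals [cbn] stays fast where [simpl] blows up; [nsatz] needs the [simpl] form. *)
Ltac cbn_coords :=
  unfold dlin, Z1, Zb1, Tf, dz1, dz2, dzb1, dzb2, theta1, thetab1, theta, half,
    ex1, ey1, ex2, ey2;
  cbn [fst snd Cplus Cminus Cmult Copp Cconj Ci RtoC Re Im].

Lemma S3_coords p : S3 p ->
  fst (fst p) ^ 2 + snd (fst p) ^ 2 + fst (snd p) ^ 2 + snd (snd p) ^ 2 = 1.
Proof. unfold S3. rewrite !Cmod2_alt. unfold Re, Im. lra. Qed.

Lemma Cconj_RtoC r : Cconj (RtoC r) = RtoC r.
Proof. apply injective_projections; simpl; ring. Qed.

Lemma Cconj_Ci : Cconj Ci = (- Ci)%C.
Proof. apply injective_projections; simpl; ring. Qed.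

Lemma theta_conj p v : Cconj (theta p v) = theta p v.
Proof.
  destruct p as [[x1 y1] [x2 y2]], v as [[a b] [c d]]. expand_coords.
  apply injective_projections; simpl; field.
Qed.

(* The coframe {theta^1, theta^1bar, theta} is dual to {Z_1, Z_1bar, T} on S^3. *)
Lemma dlin_coframe f p v : S3 p -> tangent p v ->
  dlin f p v = (Z1 f p * theta1 p v + Zb1 f p * thetab1 p v + Tf f p * theta p v)%C.
Proof.
  intros Hs Ht. apply S3_coords in Hs.
  unfold dlin, Z1, Zb1, Tf, dz1, dz2, dzb1, dzb2.
  destruct (dd f p ex1) as [d1 d2], (dd f p ey1) as [d3 d4],
    (dd f p ex2) as [d5 d6], (dd f p ey2) as [d7 d8].
  destruct p as [[x1 y1] [x2 y2]], v as [[a b] [c d]].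
  unfold tangent in Ht. expand_coords.
  assert (H2 : 2 * / 2 = 1) by field. set (hh := / 2) in *.
  apply injective_projections; simpl; nsatz.
Qed.

(* [theta1 v w] is half of d theta^1 (v, w): this is d theta^1 = theta^1 /\ (-2i theta). *)
Lemma theta1_tangent p v w : S3 p -> tangent p v -> tangent p w ->
  theta1 v w = (- (Ci * (theta1 p v * theta p w - theta p v * theta1 p w)))%C.
Proof.
  intros Hs Hv Hw. apply S3_coords in Hs.
  destruct p as [[x1 y1] [x2 y2]], v as [[a b] [c d]], w as [[e f] [g h]].
  unfold tangent in Hv, Hw. expand_coords.
  assert (H2 : 2 * / 2 = 1) by field. set (hh := / 2) in *.
  apply injective_projections; simpl; nsatz.
Qed.

Lemma Zb1_conj g f p : (forall e, basis_dir e -> dd g p e = Cconj (dd f p e)) ->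
  Zb1 g p = Cconj (Z1 f p).
Proof.
  intro H. unfold Z1, Zb1, dz1, dz2, dzb1, dzb2.
  rewrite !H by (unfold basis_dir; tauto).
  destruct (dd f p ex1), (dd f p ey1), (dd f p ex2), (dd f p ey2).
  destruct p as [[x1 y1] [x2 y2]]. expand_coords.
  apply injective_projections; simpl; ring.
Qed.

(* g real with dg = k Re (conj c df); applied to g = F, f = phi, k = F^3, c = phi. *)
Section RealChainRule.

Variables (g f : Point -> C) (p : Point) (k : R) (c : C).
Hypothesis dd_g : forall e, basis_dir e ->
  dd g p e = RtoC (k * (Re c * Re (dd f p e) + Im c * Im (dd f p e))).

Lemma Z1_chain : Z1 g p = (RtoC (k / 2) * (Cconj c * Z1 f p + c * Cconj (Zb1 f p)))%C.
Proof.
  unfold Z1, Zb1, dz1, dz2, dzb1, dzb2. rewrite !dd_g by (unfold basis_dir; tauto). clear dd_g.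
  destruct (dd f p ex1), (dd f p ey1), (dd f p ex2), (dd f p ey2), c.
  destruct p as [[x1 y1] [x2 y2]]. cbn_coords.
  apply injective_projections; simpl; field.
Qed.

Lemma Zb1_chain : Zb1 g p = Cconj (Z1 g p).
Proof. apply Zb1_conj. intros e He. rewrite dd_g by exact He. symmetry; apply Cconj_RtoC. Qed.

Lemma Tf_chain : Tf g p = (RtoC (k / 2) * (Cconj c * Tf f p + c * Cconj (Tf f p)))%C.
Proof.
  unfold Tf, dz1, dz2, dzb1, dzb2. rewrite !dd_g by (unfold basis_dir; tauto). clear dd_g.
  destruct (dd f p ex1), (dd f p ey1), (dd f p ex2), (dd f p ey2), c.
  destruct p as [[x1 y1] [x2 y2]]. cbn_coords.
  apply injective_projections; simpl; field.
Qed.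

Lemma dlin_chain v :
  dlin g p v = RtoC (k * (Re c * Re (dlin f p v) + Im c * Im (dlin f p v))).
Proof.
  unfold dlin. rewrite !dd_g by (unfold basis_dir; tauto). clear dd_g.
  destruct (dd f p ex1), (dd f p ey1), (dd f p ex2), (dd f p ey2), c.
  destruct v as [[a b] [a2 b2]]. expand_coords.
  apply injective_projections; simpl; ring.
Qed.

End RealChainRule.

Lemma Fphi_sq_rel phi p : Cmod (phi p) < 1 ->
  (Fphi phi p * Fphi phi p * (1 - phi p * Cconj (phi p)))%C = 1%C.
Proof.
  intro Hlt. rewrite <- Cmod2_conj.
  assert (Hm : 0 < 1 - Cmod (phi p) ^ 2) by (pose proof (Cmod_ge_0 (phi p)); nra).
  pose proof (sqrt_lt_R0 _ Hm) as Hs. pose proof (sqrt_sqrt _ (Rlt_le _ _ Hm)) as Hss.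
  unfold Fphi. revert Hs Hss. generalize (Cmod (phi p) ^ 2) as m. intros m Hs Hss.
  revert Hs Hss. generalize (sqrt (1 - m)) as q. intros q Hq Hss.
  apply injective_projections; simpl.
  - replace (1 + - m) with (q * q) by lra. field. lra.
  - field. lra.
Qed.

Lemma Fphi_neq0 phi p : Cmod (phi p) < 1 -> Fphi phi p <> 0%C.
Proof.
  intros Hlt H0. pose proof (Fphi_sq_rel phi p Hlt) as H. rewrite H0 in H.
  apply (f_equal fst) in H. simpl in H. lra.
Qed.

Lemma Fphi_conj phi p : Cconj (Fphi phi p) = Fphi phi p.
Proof. apply Cconj_RtoC. Qed.

Lemma Fval_cube_half phi p :
  RtoC (Fval phi p ^ 3 / 2) = (Fphi phi p * Fphi phi p * Fphi phi p / 2)%C.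
Proof.
  change (Fphi phi p) with (RtoC (Fval phi p)).
  apply injective_projections; simpl; field.
Qed.

Section SmoothPhi.

Variables (phi : Point -> C) (p : Point).
Hypotheses (phi_smooth : smooth phi) (phi_lt1 : Cmod (phi p) < 1).

Lemma dd_Fphi v : dd (Fphi phi) p v =
  RtoC (Fval phi p ^ 3 * (Re (phi p) * Re (dd phi p v) + Im (phi p) * Im (dd phi p v))).
Proof. apply is_dderive_dd, is_dderive_Fphi, smooth_dd; assumption. Qed.

Lemma dd_Fphi_dlin v : dd (Fphi phi) p v = dlin (Fphi phi) p v.
Proof.
  rewrite (dlin_chain (Fphi phi) phi p _ _ (fun e _ => dd_Fphi e)), dd_Fphi.
  rewrite (is_dderive_dd _ _ _ _ (smooth_is_dderive phi phi_smooth p v)). reflexivity.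
Qed.

Lemma Zb1_phibar : Zb1 (phibar phi) p = Cconj (Z1 phi p).
Proof.
  apply Zb1_conj. intros e _.
  apply is_dderive_dd, (is_dderive_conj phi), smooth_dd, phi_smooth.
Qed.

End SmoothPhi.

Lemma is_dderive_theta1 w p v : is_dderive (fun q => theta1 q w) p v (theta1 v w).
Proof.
  unfold theta1. eapply is_dderive_val.
  - apply is_dderive_minus; apply is_dderive_mult;
      auto using is_dderive_fst, is_dderive_snd, is_dderive_const.
  - cbv beta. ring.
Qed.

Lemma is_dderive_thetab1 w p v : is_dderive (fun q => thetab1 q w) p v (thetab1 v w).
Proof. apply (is_dderive_conj (fun q => theta1 q w)), is_dderive_theta1. Qed.

Definition dtheta1_phi (phi : Point -> C) (p v w : Point) : C :=
  (dd (Fphi phi) p v * (theta1 p w - phi p * thetab1 p w)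
   + Fphi phi p * (theta1 v w - (dd phi p v * thetab1 p w + phi p * thetab1 v w)))%C.

Lemma ext_d_theta1_phi phi p v w : smooth phi -> Cmod (phi p) < 1 ->
  ext_d (theta1_phi phi) p v w = (dtheta1_phi phi p v w - dtheta1_phi phi p w v)%C.
Proof.
  intros Hs Hlt.
  assert (Hd : forall v w, is_dderive (fun q => theta1_phi phi q w) p v (dtheta1_phi phi p v w)).
  { intros v' w'. unfold theta1_phi.
    apply (is_dderive_mult (Fphi phi) (fun q => theta1 q w' - phi q * thetab1 q w')%C).
    { rewrite dd_Fphi by assumption. apply is_dderive_Fphi, smooth_dd; assumption. }
    apply (is_dderive_minus (fun q => theta1 q w') (fun q => phi q * thetab1 q w')%C).
    { apply is_dderive_theta1. }
    apply (is_dderive_mult phi (fun q => thetab1 q w')).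
    - apply smooth_dd, Hs.
    - apply is_dderive_thetab1. }
  unfold ext_d. rewrite (is_dderive_dd _ _ _ _ (Hd v w)), (is_dderive_dd _ _ _ _ (Hd w v)).
  reflexivity.
Qed.

Lemma C_eq_of_sub_eq0 (x y : C) : (x - y)%C = 0%C -> x = y.
Proof. intro H. replace x with (x - y + y)%C by ring. rewrite H. ring. Qed.

(* Used with r := F^2 (1 - |phi|^2), to run [field] modulo the defining relation of F. *)
Lemma eq_of_unit_rel (x y k r : C) : (x - y = k * (r - 1))%C -> r = 1%C -> x = y.
Proof. intros H ->. apply C_eq_of_sub_eq0. rewrite H. ring. Qed.

Lemma structure_equation_phi phi p v w :
  smooth phi -> S3 p -> Cmod (phi p) < 1 -> tangent p v -> tangent p w ->
  ext_d (theta1_phi phi) p v w =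
  (wedge (theta1_phi phi) (omega_phi phi) p v w
   + wedge theta (fun q u => A_phi phi q * Cconj (theta1_phi phi q u)) p v w)%C.
Proof.
  intros Hs HS Hlt Hv Hw.
  rewrite ext_d_theta1_phi by assumption. unfold dtheta1_phi.
  rewrite (is_dderive_dd _ _ _ _ (smooth_is_dderive phi Hs p v)),
    (is_dderive_dd _ _ _ _ (smooth_is_dderive phi Hs p w)).
  rewrite !dlin_coframe by assumption.
  unfold wedge, theta1_phi, omega_phi, A_phi, B11, B12, B13, phi0m, thetab1, theta11, phibar.
  rewrite (theta1_tangent p v w), (theta1_tangent p w v) by assumption.
  rewrite Cmod2_conj.
  repeat rewrite ?Cmult_conj, ?Cminus_conj, ?Cplus_conj, ?Copp_conj, ?Cconj_conj, ?Cconj_Ci,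
    ?Fphi_conj, ?theta_conj.
  pose proof (Fphi_sq_rel phi p Hlt) as Hrel. pose proof (Fphi_neq0 phi p Hlt) as NZ.
  set (F := Fphi phi p) in *. set (ph := phi p) in *.
  set (al := theta1 p v) in *. set (be := theta1 p w) in *.
  set (s := theta p v) in *. set (t := theta p w) in *.
  set (P := (Tf phi p - RtoC 4 * Ci * ph)%C).
  set (X := (Cconj al * be - al * Cconj be)%C).
  set (Y := (t * Cconj al - s * Cconj be)%C).
  apply (eq_of_unit_rel _ _ (- (F * (Z1 phi p * X + P * Y)))%C
           (F * F * (1 - ph * Cconj ph))%C); [| exact Hrel].
  unfold P, X, Y. clearbody F ph al be s t. clear -NZ. field. exact NZ.
Qed.

Lemma omega_phi_skew phi p v :
  smooth phi -> S3 p -> Cmod (phi p) < 1 -> tangent p v ->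
  (omega_phi phi p v + Cconj (omega_phi phi p v))%C = 0%C.
Proof.
  intros Hs HS Hlt Hv.
  pose proof (fun e (_ : basis_dir e) => dd_Fphi phi p Hs Hlt e) as HdF.
  pose proof (Fphi_neq0 phi p Hlt) as NZ.
  unfold omega_phi, B11, B12, B13, phi0m, theta11.
  rewrite dd_Fphi_dlin, dlin_coframe by assumption.
  rewrite Zb1_phibar, (Zb1_chain _ _ _ _ _ HdF), (Tf_chain _ _ _ _ _ HdF),
    (Z1_chain _ _ _ _ _ HdF) by assumption.
  unfold phibar, thetab1. rewrite Cmod2_conj.
  repeat rewrite ?Cmult_conj, ?Cminus_conj, ?Cplus_conj, ?Copp_conj, ?Cconj_conj, ?Cconj_Ci,
    ?theta_conj, ?Cconj_RtoC.
  rewrite Cinv_conj, Fphi_conj, Fval_cube_half by exact NZ.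
  pose proof (Fphi_sq_rel phi p Hlt) as Hrel.
  set (F := Fphi phi p) in *. set (ph := phi p) in *.
  set (al := theta1 p v) in *. set (s := theta p v) in *.
  set (c := (Cconj ph * Z1 phi p + ph * Cconj (Zb1 phi p))%C).
  apply (eq_of_unit_rel _ _ (F * F * (c * al + Cconj c * Cconj al))%C
           (F * F * (1 - ph * Cconj ph))%C); [| exact Hrel].
  unfold c. repeat rewrite ?Cmult_conj, ?Cplus_conj, ?Cconj_conj.
  clearbody F ph al s. clear -NZ. field. exact NZ.
Qed.

Lemma C_eq0_of_sub_add (a d : C) : (a - d)%C = 0%C -> (Ci * (a + d))%C = 0%C -> a = 0%C.
Proof.
  destruct a as [a1 a2], d as [d1 d2]. intros H1 H2.
  apply (f_equal fst) in H1 as H1r; apply (f_equal snd) in H1 as H1i;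
    apply (f_equal fst) in H2 as H2r; apply (f_equal snd) in H2 as H2i; simpl in *.
  apply injective_projections; simpl; lra.
Qed.

Lemma C_eq0_of_skew (z : C) :
  (z + Cconj z)%C = 0%C -> (Ci * z + Cconj (Ci * z))%C = 0%C -> z = 0%C.
Proof.
  destruct z as [x y]. intros H1 H2.
  apply (f_equal fst) in H1; apply (f_equal fst) in H2; simpl in *.
  apply injective_projections; simpl; lra.
Qed.

Section Uniqueness.

Variables (tan : Point -> Prop) (th W om1 om2 : Point -> C) (A1 A2 : C).
Variables (T : Point) (X : C -> Point).
Hypotheses (tan_T : tan T) (th_T : th T = 1%C) (W_T : W T = 0%C).
Hypotheses (tan_X : forall c, tan (X c)) (th_X : forall c, th (X c) = 0%C)
  (W_X : forall c, W (X c) = c).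
Hypotheses (om1_skew : forall v, tan v -> (om1 v + Cconj (om1 v))%C = 0%C)
  (om2_skew : forall v, tan v -> (om2 v + Cconj (om2 v))%C = 0%C).
Hypothesis same_structure : forall v w, tan v -> tan w ->
  ((W v * om1 w - W w * om1 v) + (th v * (A1 * Cconj (W w)) - th w * (A1 * Cconj (W v))))%C =
  ((W v * om2 w - W w * om2 v) + (th v * (A2 * Cconj (W w)) - th w * (A2 * Cconj (W v))))%C.

Lemma connection_torsion_unique : A1 = A2 /\ forall v, tan v -> om1 v = om2 v.
Proof.
  set (dom := fun v => (om1 v - om2 v)%C). set (dA := (A1 - A2)%C).
  assert (Hdiff : forall v w, tan v -> tan w ->
    (W v * dom w - W w * dom v + dA * (th v * Cconj (W w) - th w * Cconj (W v)))%C = 0%C).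
  { intros v w Hv Hw. pose proof (same_structure v w Hv Hw) as E. unfold dom, dA.
    match type of E with ?l = ?r => transitivity (l - r)%C; [ring | rewrite E; ring] end. }
  assert (HA : dA = 0%C).
  { pose proof (Hdiff T (X 1%C) tan_T (tan_X _)) as E1.
    pose proof (Hdiff T (X Ci) tan_T (tan_X _)) as E2.
    rewrite th_T, W_T, !th_X, !W_X, !Cconj_RtoC in E1.
    rewrite th_T, W_T, !th_X, !W_X, Cconj_Ci, !Cconj_RtoC in E2.
    apply (C_eq0_of_sub_add dA (dom T)).
    - rewrite <- E1. ring.
    - match type of E2 with ?l = _ => transitivity (- l)%C; [ring | rewrite E2; ring] end. }
  assert (Hdom : forall v, tan v -> dom v = (W v * dom (X 1%C))%C).
  { intros v Hv. pose proof (Hdiff v (X 1%C) Hv (tan_X _)) as E.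
    rewrite HA, W_X in E.
    match type of E with ?l = _ => transitivity (dom v + l)%C; [rewrite E | ]; ring end. }
  assert (Hskew : forall v, tan v -> (dom v + Cconj (dom v))%C = 0%C).
  { intros v Hv. unfold dom. rewrite Cminus_conj.
    transitivity ((om1 v + Cconj (om1 v)) - (om2 v + Cconj (om2 v)))%C; [ring |].
    rewrite om1_skew, om2_skew by exact Hv. ring. }
  assert (Hdom1 : dom (X 1%C) = 0%C).
  { apply C_eq0_of_skew; [apply Hskew, tan_X |].
    rewrite <- (W_X Ci), <- Hdom by apply tan_X. apply Hskew, tan_X. }
  split.
  - apply C_eq_of_sub_eq0. exact HA.
  - intros v Hv. apply C_eq_of_sub_eq0. fold (dom v). rewrite Hdom, Hdom1 by exact Hv. ring.
Qed.

End Uniqueness.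

Definition reeb (p : Point) : Point := ((Ci * fst p)%C, (Ci * snd p)%C).
Definition horiz (p : Point) (a : C) : Point :=
  ((a * Cconj (snd p))%C, (- (a * Cconj (fst p)))%C).

Lemma reeb_coframe p : S3 p ->
  tangent p (reeb p) /\ theta1 p (reeb p) = 0%C /\ theta p (reeb p) = 1%C.
Proof.
  intro Hs. apply S3_coords in Hs.
  destruct p as [[x1 y1] [x2 y2]]. unfold tangent, reeb in *. expand_coords.
  assert (H2 : 2 * / 2 = 1) by field. set (hh := / 2) in *.
  repeat split; try apply injective_projections; cbn [fst snd]; nsatz.
Qed.

Lemma horiz_coframe p a : S3 p ->
  tangent p (horiz p a) /\ theta1 p (horiz p a) = a /\ theta p (horiz p a) = 0%C.
Proof.
  intro Hs. apply S3_coords in Hs. destruct a as [a1 a2].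
  destruct p as [[x1 y1] [x2 y2]]. unfold tangent, horiz in *. expand_coords.
  assert (H2 : 2 * / 2 = 1) by field. set (hh := / 2) in *.
  repeat split; try apply injective_projections; cbn [fst snd]; nsatz.
Qed.

Lemma theta1_phi_reeb phi p : S3 p -> theta1_phi phi p (reeb p) = 0%C.
Proof.
  intro Hs. destruct (reeb_coframe p Hs) as [_ [H _]].
  unfold theta1_phi, thetab1. rewrite H, Cconj_RtoC. ring.
Qed.

Lemma theta1_phi_horiz phi p c : S3 p -> Cmod (phi p) < 1 ->
  theta1_phi phi p (horiz p (Fphi phi p * (c + phi p * Cconj c))%C) = c.
Proof.
  intros Hs Hlt.
  destruct (horiz_coframe p (Fphi phi p * (c + phi p * Cconj c))%C Hs) as [_ [H _]].
  unfold theta1_phi, thetab1. rewrite H.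
  rewrite Cmult_conj, Cplus_conj, Cmult_conj, Cconj_conj, Fphi_conj.
  apply (eq_of_unit_rel _ _ c (Fphi phi p * Fphi phi p * (1 - phi p * Cconj (phi p)))%C);
    [ring | apply Fphi_sq_rel, Hlt].
Qed.

Lemma connection_torsion_phi_unique phi om A p :
  smooth phi -> S3 p -> Cmod (phi p) < 1 ->
  is_connection_torsion theta (theta1_phi phi) om A ->
  A p = A_phi phi p /\ forall v, tangent p v -> om p v = omega_phi phi p v.
Proof.
  intros Hs Hp Hlt H.
  destruct (reeb_coframe p Hp) as [HT [_ HthT]].
  apply (connection_torsion_unique (tangent p) (theta p) (theta1_phi phi p) (om p)
    (omega_phi phi p) (A p) (A_phi phi p) (reeb p)
    (fun c => horiz p (Fphi phi p * (c + phi p * Cconj c))%C)).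
  - exact HT.
  - exact HthT.
  - apply theta1_phi_reeb, Hp.
  - intro c. apply horiz_coframe, Hp.
  - intro c. apply horiz_coframe, Hp.
  - intro c. apply theta1_phi_horiz; assumption.
  - intros v Hv. exact (proj2 (H p Hp v v Hv Hv)).
  - intros v Hv. apply omega_phi_skew; assumption.
  - intros v w Hv Hw.
    pose proof (proj1 (H p Hp v w Hv Hw)) as E1.
    pose proof (structure_equation_phi phi p v w Hs Hp Hlt Hv Hw) as E2.
    unfold wedge in E1, E2. rewrite <- E1, <- E2. reflexivity.
Qed.

Theorem corollary4p2 (phi : Point -> C)
  (Hsmooth : smooth phi)
  (Hlt : forall p, S3 p -> Cmod (phi p) < 1) :
  forall (om : cform1) (A : Point -> C),
    is_connection_torsion theta (theta1_phi phi) om A <->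
    ((forall p, S3 p -> forall v, tangent p v -> om p v = omega_phi phi p v) /\
     (forall p, S3 p -> A p = A_phi phi p)).
Proof.
  intros om A. split.
  - intro H. split; intros p Hp;
      destruct (connection_torsion_phi_unique phi om A p Hsmooth Hp (Hlt p Hp) H); auto.
  - intros [Hom HA] p Hp v w Hv Hw. split.
    + rewrite structure_equation_phi by auto.
      unfold wedge. rewrite (Hom p Hp v Hv), (Hom p Hp w Hw), (HA p Hp). reflexivity.
    + rewrite (Hom p Hp v Hv). apply omega_phi_skew; auto.
Qed.
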